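(* Let $f:\mathbb{C}^2\to\mathbb{C}$ be a convenient mixed polynomial that is strongly Newton non-degenerate in Oka's sense. Then $f$ has a strongly Newton inner non-degenerate boundary.
   Context: Mixed polynomials: $f=\sum c_{\nu,\mu}z^\nu\bar z^\mu$ with $z=(u,v)\in\mathbb{C}^2$, $z^\nu=u^{\nu_1}v^{\nu_2}$, $\bar z^\mu=\bar u^{\mu_1}\bar v^{\mu_2}$, regarded as a real map $\mathbb{R}^4\to\mathbb{R}^2$. $\Sigma_f$ (the critical points) is the common zero set of $f_u\overline{f_{\bar v}}-\overline{f_{\bar u}}f_v$, $|f_u|^2-|f_{\bar u}|^2$, $|f_v|^2-|f_{\bar v}|^2$ (Wirtinger derivatives), equivalently where the real Jacobian has rank $<2$. $(\mathbb{C}^* )^2=(\mathbb{C}\setminus\{0\})^2$. Newton data: $\mathrm{supp}(f)=\{\nu+\mu:c_{\nu,\mu}\ne0\}$; $\Gamma_+(f)$ = convex hull of $\bigcup_{w\in\mathrm{supp}(f)}(w+\mathbb{R}^2_{\ge0})$, with $N\ge1$ compact 1-faces; $\Gamma(f)$ = lattice points on compact faces. $f$ is convenient if $\Gamma(f)$ meets both coordinate axes. For a compact face $\Delta$ (vertex or edge), $f_\Delta$ = sum of terms with $\nu+\mu\in\Delta$. Compact 1-faces $\Delta(P_1),\dots,\Delta(P_N)$, $P_i=(p_{i,1},p_{i,2})$ primitive positive weight vector orthogonal to the edge, ordered so $p_{i,1}/p_{i,2}$ strictly decreases; $f_{P_i}:=f_{\Delta(P_i)}$. A vertex is extreme if on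 exactly one compact 1-face, non-extreme if on two. $f$ is strongly Newton non-degenerate (Oka) if $\Sigma_{f_\Delta}\cap(\mathbb{C}^* )^2=\emptyset$ for every compact face $\Delta$ (vertices and edges). $f$ has a strongly Newton inner non-degenerate boundary if (i) $f_{P_1}$ has no critical points in $\mathbb{C}^2\setminus\{v=0\}$ and $f_{P_N}$ none in $\mathbb{C}^2\setminus\{u=0\}$; (ii) for each compact 1-face and non-extreme vertex $\Delta$, $f_\Delta$ has no critical points in $(\mathbb{C}^* )^2$. *)

(* Mixed polynomials f(z, zbar), z = (u,v), are represented
   as multinomial polynomials {mpoly CC[4]} in the four formal variables
   'X_0 = u, 'X_1 = v, 'X_2 = ubar, 'X_3 = vbar, with coefficients in
   CC = R[i] (R = the Stdlib real numbers, via Rstruct), i.e. CC = complex numbers. *)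
From Stdlib Require Import Reals.
From HB Require Import structures.
From mathcomp Require Import all_boot all_order all_algebra.
From mathcomp Require Import complex.
From mathcomp Require Import Rstruct.
From mathcomp Require Import mpoly.
Set Implicit Arguments. Unset Strict Implicit. Unset Printing Implicit Defensive.
Import Order.TTheory GRing.Theory Num.Theory.
Local Open Scope ring_scope.

Definition CC : Type := (Rdefinitions.R : rcfType)[i].

Definition mixpoly := {mpoly CC[4]}.

Definition iu : 'I_4 := inord 0.
Definition iv : 'I_4 := inord 1.
Definition iub : 'I_4 := inord 2.
Definition ivb : 'I_4 := inord 3.

Definition mev (g : mixpoly) (u v : CC) : CC :=
  g.@[fun i : 'I_4 => nth 0 [:: u; v; u^*; v^*] i].

(* Wirtinger derivatives of a mixed polynomial: formal partial derivatives
   treating z and zbar as independent variables. *)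
Definition d_u (g : mixpoly) := mderiv iu g.
Definition d_v (g : mixpoly) := mderiv iv g.
Definition d_ub (g : mixpoly) := mderiv iub g.
Definition d_vb (g : mixpoly) := mderiv ivb g.

Definition critical (g : mixpoly) (u v : CC) : Prop :=
  let gu := mev (d_u g) u v in let gv := mev (d_v g) u v in
  let gub := mev (d_ub g) u v in let gvb := mev (d_vb g) u v in
  [/\ gu * gvb^* - gub^* * gv = 0,
      gu * gu^* - gub * gub^* = 0 &
      gv * gv^* - gvb * gvb^* = 0].

(* exponent of the term c z^nu zbar^mu, i.e. nu + mu in N^2 *)
Definition expo (m : 'X_{1..4}) : nat * nat := ((m iu + m iub)%N, (m iv + m ivb)%N).

Definition suppN (f : mixpoly) : seq (nat * nat) := map expo (msupp f).

Definition wt (P w : nat * nat) : nat := (P.1 * w.1 + P.2 * w.2)%N.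
Definition posw (P : nat * nat) : bool := (0 < P.1)%N && (0 < P.2)%N.

(* d(P) <= P.w  (d(P) = min of P over supp(f), equivalently over Gamma_+(f)) *)
Definition above (f : mixpoly) (P w : nat * nat) : bool :=
  has (fun s => wt P s <= wt P w)%N (suppN f).
Definition minimal (f : mixpoly) (P w : nat * nat) : bool :=
  all (fun s => wt P w <= wt P s)%N (suppN f).

(* lattice point w lies in Gamma_+(f) (intersection of the half-planes
   P.w >= d(P), P positive; the coordinate half-planes are automatic in N^2) *)
Definition inGplus (f : mixpoly) (w : nat * nat) : Prop :=
  forall P, posw P -> above f P w.

Definition onFace (f : mixpoly) (P w : nat * nat) : Prop :=
  [/\ inGplus f w, above f P w & minimal f P w].

(* Gamma(f): lattice points on compact faces (compact faces are exactly the
   Delta(P) with P strictly positive) *)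
Definition Gamma (f : mixpoly) (w : nat * nat) : Prop :=
  exists P, posw P /\ onFace f P w.

Definition convenient (f : mixpoly) : Prop :=
  (exists a, Gamma f (a, 0%N)) /\ (exists b, Gamma f (0%N, b)).

Definition faceP (f : mixpoly) (P : nat * nat) : mixpoly :=
  \sum_(m <- msupp f | minimal f P (expo m)) f@_m *: 'X_[m].

Definition faceV (f : mixpoly) (w : nat * nat) : mixpoly :=
  \sum_(m <- msupp f | expo m == w) f@_m *: 'X_[m].

(* P is the primitive positive weight vector of a compact 1-face Delta(P):
   Delta(P) contains two distinct points of supp(f) *)
Definition edgeW (f : mixpoly) (P : nat * nat) : Prop :=
  [/\ posw P, coprime P.1 P.2 &
      exists s1 s2, [/\ s1 \in suppN f, s2 \in suppN f, s1 != s2,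
                        minimal f P s1 & minimal f P s2]].

(* P_1: the compact 1-face weight with the largest ratio p1/p2;
   P_N: the one with the smallest ratio *)
Definition firstEdgeW (f : mixpoly) (P : nat * nat) : Prop :=
  edgeW f P /\ forall Q, edgeW f Q -> (Q.1 * P.2 <= P.1 * Q.2)%N.
Definition lastEdgeW (f : mixpoly) (P : nat * nat) : Prop :=
  edgeW f P /\ forall Q, edgeW f Q -> (P.1 * Q.2 <= Q.1 * P.2)%N.

Definition nonExtremeVertex (f : mixpoly) (w : nat * nat) : Prop :=
  w \in suppN f /\
  exists P Q, [/\ edgeW f P, edgeW f Q, P <> Q, minimal f P w & minimal f Q w].

Definition torus (u v : CC) : Prop := u != 0 /\ v != 0.

Definition strongly_newton_nondeg (f : mixpoly) : Prop :=
  forall P, posw P -> forall u v, torus u v -> ~ critical (faceP f P) u v.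

Definition strongly_inner_nondeg_boundary (f : mixpoly) : Prop :=
  [/\ (forall P, firstEdgeW f P -> forall u v, v != 0 -> ~ critical (faceP f P) u v),
      (forall P, lastEdgeW f P -> forall u v, u != 0 -> ~ critical (faceP f P) u v),
      (forall P, edgeW f P -> forall u v, torus u v -> ~ critical (faceP f P) u v) &
      (forall w, nonExtremeVertex f w -> forall u v, torus u v -> ~ critical (faceV f w) u v)].

(* Points of the torus are covered by Oka's condition itself, and the face
   function of a non-extreme vertex w is f_(P+Q) for the two edges P, Q
   through w.  The new case is a critical point of f_(P_1) on the axis u = 0
   (symmetrically, of f_(P_N) on v = 0).  Convenience gives a vertex (0, b0)
   on the v-axis, and it lies on Delta(P_1): otherwise the segment from (0, b0)
   to the support point of largest slope would be a compact edge steeper than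
   P_1.  At u = 0 the v-derivatives of f_(P_1) only see the monomials free of
   u and ubar, i.e. those of the vertex function f_(0,b0) = f_(P') with
   P' = (b0 + 1, 1), whose u-derivatives vanish.  Hence (1, v) would be a
   critical point of f_(P') in the torus, contradicting Oka's condition. *)

From HB Require Import structures.
From mathcomp Require Import all_boot all_order all_algebra.
From mathcomp Require Import complex Rstruct mpoly zify.
Set Implicit Arguments. Unset Strict Implicit. Unset Printing Implicit Defensive.
Import Order.TTheory GRing.Theory Num.Theory.

Lemma seq_argmax (T : eqType) d (U : orderType d) (k : T -> U) (s : seq T) x0 :
  x0 \in s -> exists2 m, m \in s & forall t, t \in s -> (k t <= k m)%O.
Proof.
elim: s x0 => [//|x s IH] x0 _.
case: s IH => [|y s] IH.
  by exists x => [|t]; rewrite ?mem_head // mem_seq1 => /eqP ->.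
have [m ms mmax] := IH y (mem_head _ _).
have [kxm | kmx] := leP (k x) (k m).
  by exists m => [|t]; rewrite in_cons ?ms ?orbT // => /predU1P [->|/mmax].
exists x => [|t]; first exact: mem_head.
by rewrite in_cons => /predU1P [->|/mmax/le_trans->] //; apply: ltW.
Qed.

Lemma ler_int_ratio (a b : int) (c d : nat) : (0 < c)%N -> (0 < d)%N ->
  (a%:~R / c%:R <= b%:~R / d%:R :> rat)%R = (a * d%:Z <= b * c%:Z)%R.
Proof.
move=> c0 d0; rewrite ler_pdivrMr ?ltr0n // mulrAC ler_pdivlMr ?ltr0n //.
by rewrite -(intrM rat a d%:Z) -(intrM rat b c%:Z) ler_int.
Qed.

Lemma coprime_div_gcdn m n : (0 < n)%N -> coprime (m %/ gcdn m n) (n %/ gcdn m n).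
Proof.
move=> n0; have g0 : (0 < gcdn m n)%N by rewrite gcdn_gt0 n0 orbT.
rewrite /coprime -(eqn_pmul2r g0) muln_gcdl !divnK ?dvdn_gcdl ?dvdn_gcdr //.
by rewrite mul1n.
Qed.

Lemma coprime_proportional_eq (p1 p2 q1 q2 : nat) :
  (0 < p1)%N -> (0 < q1)%N -> coprime p1 p2 -> coprime q1 q2 ->
  (p1 * q2 = p2 * q1)%N -> p1 = q1 /\ p2 = q2.
Proof.
move=> p0 q0 cp cq e.
have e1 : p1 = q1.
  apply/eqP; rewrite eqn_dvd -(Gauss_dvdr _ cp) -e dvdn_mulr //=.
  by rewrite -(Gauss_dvdr _ cq) mulnC e dvdn_mull.
by subst q1; split => //; apply/eqP; rewrite -(eqn_pmul2l p0) e mulnC.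
Qed.

Definition minimal_in (S : seq (nat * nat)) (P w : nat * nat) : bool :=
  all (fun s => wt P w <= wt P s)%N S.

Definition edge_weight (S : seq (nat * nat)) (Q : nat * nat) : Prop :=
  [/\ posw Q, coprime Q.1 Q.2 &
      exists s1 s2, [/\ s1 \in S, s2 \in S, s1 != s2,
                        minimal_in S Q s1 & minimal_in S Q s2]].

Definition axis_vertex (S : seq (nat * nat)) (b : nat) : Prop :=
  (0%N, b) \in S /\ forall y, (0%N, y) \in S -> (b <= y)%N.

Section Support.

Variable S : seq (nat * nat).

Lemma minimal_in_scale c P w : (0 < c)%N ->
  minimal_in S ((c * P.1)%N, (c * P.2)%N) w = minimal_in S P w.
Proof.
move=> c0; apply: eq_all => s; rewrite /wt /= -!mulnA -!mulnDr.
by rewrite leq_pmul2l.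
Qed.

Lemma edge_weight_primitive Q s1 s2 :
  posw Q -> s1 \in S -> s2 \in S -> s1 != s2 ->
  minimal_in S Q s1 -> minimal_in S Q s2 ->
  exists2 Q', edge_weight S Q' & (Q.1 * Q'.2 = Q.2 * Q'.1)%N.
Proof.
case: Q => q1 q2 /andP [/= q10 q20] s1S s2S s12 m1 m2.
set g := gcdn q1 q2; have g0 : (0 < g)%N by rewrite gcdn_gt0 q10.
have gQ : ((g * (q1 %/ g))%N, (g * (q2 %/ g))%N) = (q1, q2).
  by rewrite ![(g * _)%N]mulnC !divnK ?dvdn_gcdl ?dvdn_gcdr.
exists (q1 %/ g, q2 %/ g); last exact: muln_divCA_gcd.
split.
- by apply/andP; split; rewrite /= divn_gt0 // dvdn_leq // ?dvdn_gcdl ?dvdn_gcdr.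
- exact: coprime_div_gcdn.
by exists s1, s2; split; rewrite // -(minimal_in_scale _ _ g0) gQ.
Qed.

Lemma minimal_in_first_edge_axis b0 P :
  axis_vertex S b0 -> posw P ->
  (forall Q, edge_weight S Q -> (Q.1 * P.2 <= P.1 * Q.2)%N) ->
  minimal_in S P (0%N, b0).
Proof.
case=> b0S b0min; case: P => p1 p2 /andP [/= p10 p20] Pmax.
apply/allP => -[x0 y0] s0S; rewrite leqNgt; apply/negP; rewrite /wt /= => below.
have x00 : (0 < x0)%N.
  by rewrite lt0n; apply/eqP => x0e; subst x0; have := b0min _ s0S; nia.
(* (0, b0) and the support point of largest slope span an edge steeper than P. *)
pose slope (t : nat * nat) : rat := ((b0%:Z - t.2%:Z)%:~R / t.1%:R)%R.
have s0S' : (x0, y0) \in [seq t <- S | (0 < t.1)%N] by rewrite mem_filter x00.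
have [[m1 m2]] := seq_argmax slope s0S'.
rewrite mem_filter /= => /andP [m10 mS] mmax.
have cross t : t \in S -> (0 < t.1)%N ->
    ((b0%:Z - t.2%:Z) * m1%:Z <= (b0%:Z - m2%:Z) * t.1%:Z)%R.
  by move=> tS t10; rewrite -ler_int_ratio //; apply: mmax; rewrite mem_filter t10.
have s0m := cross _ s0S x00; rewrite /= in s0m.
have y0b0 : (y0 < b0)%N by nia.
have m2b0 : (m2 < b0)%N.
  rewrite ltnNge; apply/negP => b0m2.
  have : ((b0%:Z - m2%:Z) * x0%:Z <= 0)%R by apply: mulr_le0_ge0; lia.
  have : (0 < (b0%:Z - y0%:Z) * m1%:Z)%R by apply: mulr_gt0; lia.
  lia.
pose Q := ((b0 - m2)%N, m1).
have Qb0 : minimal_in S Q (0%N, b0).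
  apply/allP => -[t1 t2] tS; rewrite /wt /=.
  have [t10|t10] := posnP t1; first by subst t1; have := b0min _ tS; nia.
  by have := cross _ tS t10; rewrite /=; nia.
have Qm : minimal_in S Q (m1, m2).
  by apply/allP => t /(allP Qb0); rewrite /wt /=; nia.
have Qpos : posw Q by rewrite /posw /= subn_gt0 m2b0.
have b0m : (0%N, b0) != (m1, m2) by apply: contraTneq m10 => -[<-].
have [[q1 q2] Qe /= Qq] := edge_weight_primitive Qpos b0S mS b0m Qb0 Qm.
have /= := Pmax _ Qe; case: Qe => /andP [/= q10 q20] _ _ qP.
have QP : ((b0 - m2) * p2 <= p1 * m1)%N by rewrite -(leq_pmul2r q20); nia.
nia.
Qed.

Lemma minimal_in_axis_weight b0 e : axis_vertex S b0 -> e \in S ->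
  minimal_in S (b0.+1, 1%N) e = (e == (0%N, b0)).
Proof.
case=> b0S b0min; case: e => x y eS; apply/idP/eqP => [|[-> ->]].
  move/allP/(_ _ b0S); rewrite /wt /= => le_b0.
  have x0 : x = 0%N by nia.
  by subst x; have := b0min _ eS => b0y; congr (_, _); lia.
apply/allP => -[t1 t2] tS; rewrite /wt /=.
by have [t10|] := posnP t1; [subst t1; have := b0min _ tS | ]; nia.
Qed.

Lemma minimal_in_axis_point b0 P y : axis_vertex S b0 -> (0 < P.2)%N ->
  (0%N, y) \in S -> minimal_in S P (0%N, y) -> y = b0.
Proof.
case=> b0S b0min p20 yS /allP/(_ _ b0S); rewrite /wt /= !muln0 !add0n.
by rewrite leq_pmul2l // => yb0; apply/eqP; rewrite eqn_leq yb0 b0min.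
Qed.

Lemma minimal_in_axis_restrict b0 P e :
  axis_vertex S b0 -> (0 < P.2)%N -> minimal_in S P (0%N, b0) -> e \in S ->
  minimal_in S (b0.+1, 1%N) e = minimal_in S P e && (e.1 == 0%N).
Proof.
move=> b0S p20 b0P eS; rewrite minimal_in_axis_weight //; case: e eS => x y eS /=.
apply/eqP/andP => [[-> ->] // | [yP /eqP x0]]; subst x.
by rewrite (minimal_in_axis_point b0S p20 eS yP).
Qed.

Lemma minimal_in_sum_weight P Q w e :
  posw P -> posw Q -> coprime P.1 P.2 -> coprime Q.1 Q.2 -> P <> Q ->
  w \in S -> e \in S -> minimal_in S P w -> minimal_in S Q w ->
  minimal_in S ((P.1 + Q.1)%N, (P.2 + Q.2)%N) e = (e == w).
Proof.
case: P Q w e => [p1 p2] [q1 q2] [w1 w2] [e1 e2] /andP [/= p10 p20]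
  /andP [/= q10 q20] /= cp cq PQ wS eS wP wQ.
apply/idP/eqP => [|[-> ->]]; last first.
  by apply/allP => s sS; have := allP wP _ sS; have := allP wQ _ sS; rewrite /wt /=; lia.
move/allP/(_ _ wS); have := allP wP _ eS; have := allP wQ _ eS; rewrite /wt /= => eQ eP ePQ.
have det : (p1 * q2 != p2 * q1)%N.
  by apply: contra_notN PQ => /eqP /coprime_proportional_eq [] // -> ->.
have : ((p1%:Z * q2%:Z - p2%:Z * q1%:Z) * (e1%:Z - w1%:Z) = 0)%R by nia.
move/eqP; rewrite mulf_eq0 => /orP [|/eqP e1w1]; first by lia.
have {}e1w1 : e1 = w1 by lia.
by subst e1; congr (_, _); nia.
Qed.

End Support.

Definition swap_pt (x : nat * nat) : nat * nat := (x.2, x.1).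

Lemma swap_ptK : involutive swap_pt. Proof. by case. Qed.

Lemma mem_map_swap S x : (x \in map swap_pt S) = (swap_pt x \in S).
Proof. by rewrite -{1}(swap_ptK x) (mem_map (can_inj swap_ptK)). Qed.

Lemma minimal_in_swap S P w :
  minimal_in (map swap_pt S) (swap_pt P) (swap_pt w) = minimal_in S P w.
Proof.
rewrite /minimal_in all_map; apply: eq_all => s.
by rewrite /wt /= addnC [X in (_ <= X)%N]addnC.
Qed.

Lemma edge_weight_swap S Q : edge_weight (map swap_pt S) Q -> edge_weight S (swap_pt Q).
Proof.
case=> /andP [q10 q20] cQ [s1 [s2 [s1S s2S s12 m1 m2]]].
split; first by rewrite /posw q10 q20.
  by rewrite coprime_sym.
exists (swap_pt s1), (swap_pt s2); split; rewrite -?mem_map_swap ?swap_ptK //.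
- by rewrite (inj_eq (can_inj swap_ptK)).
- by rewrite -minimal_in_swap !swap_ptK.
- by rewrite -minimal_in_swap !swap_ptK.
Qed.

Lemma minimal_in_last_edge_axis S a0 P :
  axis_vertex (map swap_pt S) a0 -> posw P ->
  (forall Q, edge_weight S Q -> (P.1 * Q.2 <= Q.1 * P.2)%N) ->
  minimal_in S P (a0, 0%N).
Proof.
move=> a0S /andP [p10 p20] Pmin; rewrite -minimal_in_swap.
apply: minimal_in_first_edge_axis => [//||Q /edge_weight_swap/Pmin].
  by rewrite /posw p10 p20.
by rewrite /= mulnC [X in (_ <= X)%N]mulnC.
Qed.

Lemma minimal_in_axis_restrict_swap S a0 P e :
  axis_vertex (map swap_pt S) a0 -> (0 < P.1)%N -> minimal_in S P (a0, 0%N) ->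
  e \in S -> minimal_in S (1%N, a0.+1) e = minimal_in S P e && (e.2 == 0%N).
Proof.
move=> a0S p10 a0P eS; rewrite -minimal_in_swap -[minimal_in S P e]minimal_in_swap.
apply: minimal_in_axis_restrict; rewrite ?mem_map_swap ?swap_ptK //.
by rewrite -[(0%N, a0)]/(swap_pt (a0, 0%N)) minimal_in_swap.
Qed.

Lemma axis_vertex_exists S : (exists y, (0%N, y) \in S) -> exists b0, axis_vertex S b0.
Proof. by case/ex_minnP => b0 b0S b0min; exists b0. Qed.

Lemma convenient_axis_vertices f : convenient f ->
  (exists a0, axis_vertex (map swap_pt (suppN f)) a0) /\
  (exists b0, axis_vertex (suppN f) b0).
Proof.
case=> [[a [P [_ [/(_ (1%N, a.+1) isT) /hasP [[x y] xyS]]]]]].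
rewrite /wt /= => xya _ _ [b [Q [_ [/(_ (b.+1, 1%N) isT) /hasP [[x' y'] xyS']]]]].
rewrite /wt /= => xyb _ _.
have y0 : y = 0%N by nia.
have x0 : x' = 0%N by nia.
subst y x'; split; apply: axis_vertex_exists; last by exists y'.
by exists x; rewrite mem_map_swap.
Qed.

Local Open Scope ring_scope.

Definition face_poly (f : mixpoly) (p : pred 'X_{1..4}) : mixpoly :=
  \sum_(m <- msupp f | p m) f@_m *: 'X_[m].

Lemma meval_mderiv_face (f : mixpoly) p k (x : 'I_4 -> CC) :
  (mderiv k (face_poly f p)).@[x] =
  \sum_(m <- msupp f | p m) f@_m * (mderiv k 'X_[m]).@[x].
Proof.
rewrite /face_poly; elim: (msupp f) => [|m s IH].
  by rewrite !big_nil mderiv0 meval0.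
by rewrite !big_cons; case: (p m); rewrite // mderivD mevalD IH mderivZ mevalZ.
Qed.

Lemma meval_mderivX_free k (m : 'X_{1..4}) (x : 'I_4 -> CC) :
  m k = 0%N -> (mderiv k 'X_[m]).@[x] = 0.
Proof. by move=> mk; rewrite mderivX mk scale0r meval0. Qed.

Lemma meval_mderivX_zero k j (m : 'X_{1..4}) (x : 'I_4 -> CC) :
  j != k -> x j = 0 -> (0 < m j)%N -> (mderiv k 'X_[m]).@[x] = 0.
Proof.
move=> jk xj mj; rewrite mderivX mevalZ mevalX (bigD1 j) //= xj mnmBE mnm1E eq_sym.
by rewrite (negbTE jk) subn0 expr0n eqn0Ngt mj mul0r mulr0.
Qed.

Lemma meval_mderivX_eq k (m : 'X_{1..4}) (x y : 'I_4 -> CC) :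
  (forall j, (0 < m j)%N -> x j = y j) ->
  (mderiv k 'X_[m]).@[x] = (mderiv k 'X_[m]).@[y].
Proof.
move=> xy; rewrite !mderivX !mevalZ !mevalX; congr (_ * _); apply: eq_bigr => j _.
have [mj0|mj] := posnP ((m - U_(k))%MM j); first by rewrite mj0 !expr0.
by rewrite xy // (leq_trans mj) // mnmBE leq_subr.
Qed.

Lemma meval_mderiv_face_free (f : mixpoly) (q : pred 'X_{1..4}) k (x : 'I_4 -> CC) :
  (forall m, m \in msupp f -> q m -> m k = 0%N) ->
  (mderiv k (face_poly f q)).@[x] = 0.
Proof.
move=> qk; rewrite meval_mderiv_face big_seq_cond big1 // => m /andP [mf qm].
by rewrite meval_mderivX_free ?mulr0 ?qk.
Qed.

Definition face_restriction (f : mixpoly) (p q : pred 'X_{1..4}) (a ab : 'I_4) :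
  Prop :=
  forall m, m \in msupp f -> q m = p m && (m a + m ab == 0)%N.

Section FaceRestriction.

Variables (f : mixpoly) (p q : pred 'X_{1..4}) (a ab : 'I_4).
Hypothesis fpq : face_restriction f p q a ab.

Lemma face_restriction_free m : m \in msupp f -> q m -> m a = 0%N /\ m ab = 0%N.
Proof.
move=> mf; rewrite fpq // => /andP [_].
by rewrite addn_eq0 => /andP [/eqP -> /eqP ->].
Qed.

Lemma meval_mderiv_face_restrict k (x y : 'I_4 -> CC) :
  k != a -> k != ab -> x a = 0 -> x ab = 0 ->
  (forall j, j != a -> j != ab -> x j = y j) ->
  (mderiv k (face_poly f p)).@[x] = (mderiv k (face_poly f q)).@[y].
Proof.
move=> ka kab xa xab xy; rewrite !meval_mderiv_face big_mkcond [RHS]big_mkcond.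
apply: eq_big_seq => m mf /=; case qm: (q m).
  have [ma mab] := face_restriction_free mf qm.
  move: qm; rewrite fpq // => /andP [-> _]; congr (_ * _).
  apply: meval_mderivX_eq => j mj; apply: xy; apply: contraTneq mj => ->.
    by rewrite ma.
  by rewrite mab.
case pm: (p m) => //; move/negbT: qm; rewrite fpq // pm /= addn_eq0 negb_and -!lt0n.
case/orP => [ma|mab].
  by rewrite (meval_mderivX_zero _ (j := a)) ?mulr0 // eq_sym.
by rewrite (meval_mderivX_zero _ (j := ab)) ?mulr0 // eq_sym.
Qed.

End FaceRestriction.

Definition mpt (u v : CC) : 'I_4 -> CC := fun i => nth 0 [:: u; v; u^*; v^*] i.

Lemma var_neq_vu : [/\ iv != iu, iv != iub, ivb != iu & ivb != iub].
Proof. by split; rewrite -val_eqE /= !inordK. Qed.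

Lemma mpt_off_u v j : j != iu -> j != iub -> mpt 0 v j = mpt 1 v j.
Proof. by case: j => -[|[|[|[|//]]]] j4; rewrite -!val_eqE /= ?inordK. Qed.

Lemma mpt_off_v u j : j != iv -> j != ivb -> mpt u 0 j = mpt u 1 j.
Proof. by case: j => -[|[|[|[|//]]]] j4; rewrite -!val_eqE /= ?inordK. Qed.

Lemma critical_face_restrict_u (f : mixpoly) p q v :
  face_restriction f p q iu iub ->
  critical (face_poly f p) 0 v -> critical (face_poly f q) 1 v.
Proof.
move=> fpq; rewrite /critical /mev /d_u /d_v /d_ub /d_vb -!/(mpt _ _).
have [vu vub vbu vbub] := var_neq_vu.
have x0 : mpt 0 v iu = 0 by rewrite /mpt /iu inordK.
have x0b : mpt 0 v iub = 0 by rewrite /mpt /iub inordK //=; apply: conjC0.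
have restrict k : k != iu -> k != iub ->
    ((face_poly f p)^`M(k)).@[mpt 0 v] = ((face_poly f q)^`M(k)).@[mpt 1 v].
  by move=> ku kub; apply: meval_mderiv_face_restrict (@mpt_off_u v).
have [-> ->] : ((face_poly f q)^`M(iu)).@[mpt 1 v] = 0 /\
                ((face_poly f q)^`M(iub)).@[mpt 1 v] = 0.
  by split; apply: meval_mderiv_face_free => m mf /(face_restriction_free fpq mf) [].
rewrite (restrict iv) // (restrict ivb) // => -[_ _ crit_v].
by split; rewrite // conjC0 !mul0r subr0.
Qed.

Lemma critical_face_restrict_v (f : mixpoly) p q u :
  face_restriction f p q iv ivb ->
  critical (face_poly f p) u 0 -> critical (face_poly f q) u 1.
Proof.
move=> fpq; rewrite /critical /mev /d_u /d_v /d_ub /d_vb -!/(mpt _ _).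
have [vu vub vbu vbub] := var_neq_vu.
have x0 : mpt u 0 iv = 0 by rewrite /mpt /iv inordK.
have x0b : mpt u 0 ivb = 0 by rewrite /mpt /ivb inordK //=; apply: conjC0.
have restrict k : k != iv -> k != ivb ->
    ((face_poly f p)^`M(k)).@[mpt u 0] = ((face_poly f q)^`M(k)).@[mpt u 1].
  by move=> kv kvb; apply: meval_mderiv_face_restrict (@mpt_off_v u).
have [-> ->] : ((face_poly f q)^`M(iv)).@[mpt u 1] = 0 /\
                ((face_poly f q)^`M(ivb)).@[mpt u 1] = 0.
  by split; apply: meval_mderiv_face_free => m mf /(face_restriction_free fpq mf) [].
rewrite (restrict iu) 1?eq_sym // (restrict iub) 1?eq_sym // => -[_ crit_u _].
by split; rewrite // conjC0 !mulr0 subr0.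
Qed.

Lemma minimalE (f : mixpoly) P w : minimal f P w = minimal_in (suppN f) P w.
Proof. by []. Qed.

Lemma expo_in_supp (f : mixpoly) m : m \in msupp f -> expo m \in suppN f.
Proof. exact: map_f. Qed.

Lemma first_edge_not_critical_u0 (f : mixpoly) b0 P v :
  axis_vertex (suppN f) b0 -> firstEdgeW f P -> strongly_newton_nondeg f ->
  v != 0 -> ~ critical (faceP f P) 0 v.
Proof.
move=> b0S [[Ppos _ _] Pmax] oka v0 crit.
have p20 : (0 < P.2)%N by case/andP: Ppos.
have b0P := minimal_in_first_edge_axis b0S Ppos Pmax.
apply: (oka (b0.+1, 1%N) isT 1 v); first by split; rewrite ?oner_eq0.
apply: critical_face_restrict_u crit => m /expo_in_supp mS.
by rewrite /= !minimalE (minimal_in_axis_restrict b0S p20 b0P mS).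
Qed.

Lemma last_edge_not_critical_v0 (f : mixpoly) a0 P u :
  axis_vertex (map swap_pt (suppN f)) a0 -> lastEdgeW f P ->
  strongly_newton_nondeg f -> u != 0 -> ~ critical (faceP f P) u 0.
Proof.
move=> a0S [[Ppos _ _] Pmin] oka u0 crit.
have p10 : (0 < P.1)%N by case/andP: Ppos.
have a0P := minimal_in_last_edge_axis a0S Ppos Pmin.
apply: (oka (1%N, a0.+1) isT u 1); first by split; rewrite ?oner_eq0.
apply: critical_face_restrict_v crit => m /expo_in_supp mS.
by rewrite /= !minimalE (minimal_in_axis_restrict_swap a0S p10 a0P mS).
Qed.

Lemma faceV_sum_weight (f : mixpoly) w P Q :
  w \in suppN f -> edgeW f P -> edgeW f Q -> P <> Q ->
  minimal f P w -> minimal f Q w ->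
  faceV f w = faceP f ((P.1 + Q.1)%N, (P.2 + Q.2)%N).
Proof.
move=> wS [Ppos cP _] [Qpos cQ _] PQ wP wQ.
rewrite /faceV /faceP big_seq_cond [RHS]big_seq_cond; apply: eq_bigl => m.
case mf: (m \in msupp f) => //=.
by rewrite minimalE (minimal_in_sum_weight Ppos Qpos cP cQ PQ wS (expo_in_supp mf)).
Qed.

Theorem mainTheorem12 (f : mixpoly) :
  convenient f ->
  (exists P, edgeW f P) ->
  strongly_newton_nondeg f ->
  strongly_inner_nondeg_boundary f.
Proof.
move=> conv _ oka; have [[a0 a0S] [b0 b0S]] := convenient_axis_vertices conv.
have edge_pos P : edgeW f P -> posw P by case.
split.
- move=> P P_first u v v0; have [->|u0] := eqVneq u 0.
    exact: first_edge_not_critical_u0 b0S P_first oka v0.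
  by apply: oka; [case: P_first => /edge_pos | split].
- move=> P P_last u v u0; have [->|v0] := eqVneq v 0.
    exact: last_edge_not_critical_v0 a0S P_last oka u0.
  by apply: oka; [case: P_last => /edge_pos | split].
- by move=> P /edge_pos; apply: oka.
- move=> w [wS [P [Q [EP EQ PQ wP wQ]]]] u v uv.
  rewrite (faceV_sum_weight wS EP EQ PQ wP wQ); apply: oka uv.
  by case/andP: (edge_pos _ EP) => p10 p20; rewrite /posw /= !addn_gt0 p10 p20.
Qed.
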